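(* Let $g_A(w)=\exp\!\left(-\tfrac23\operatorname{Re} w^{3/2}\right)$ with the principal branch of $w^{3/2}$ (cut along $(-\infty,0]$). If $z\in\mathbb{C}\setminus\mathbb{R}$, then the map $x\mapsto g_A(x-z)$, $x\in[0,\infty)$, is decreasing. If $z\in\mathbb{R}$, then $g_A(x-z)=1$ for $x\in[0,z]$ and $x\mapsto g_A(x-z)$ is decreasing for $x\in(z,\infty)$. *)

From Stdlib Require Import Reals.
From Coquelicot Require Import Coquelicot.
Open Scope R_scope.

(* Principal argument Arg w in (-PI, PI] for w <> 0:
   acos(Re w / |w|) if Im w >= 0, and -acos(Re w / |w|) if Im w < 0.
   (On the cut (-oo,0) this gives PI.)  Value at w = 0 is irrelevant. *)
Definition Arg (w : C) : R :=
  if Rle_dec 0 (Im w) then acos (Re w / Cmod w) else - acos (Re w / Cmod w).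

(* Principal branch w^{3/2} = exp((3/2) Log w), cut along (-oo,0]; 0^{3/2} = 0. *)
Definition cpow32 (w : C) : C :=
  if Ceq_dec w 0 then 0
  else (Rpower (Cmod w) (3/2) * cos (3/2 * Arg w),
        Rpower (Cmod w) (3/2) * sin (3/2 * Arg w)).

Definition gA (w : C) : R := exp (- (2/3) * Re (cpow32 w)).

(* Write w = u + i b, r = |w| and t = Re sqrt w = sqrt ((r + u) / 2).  Then
   Re w^(3/2) = (2 u - r) t, and for b <> 0 this equals t^3 - 3 b^2 / (4 t).
   Along a horizontal line Im w = b <> 0, r + u increases with u, hence so do t
   and Re w^(3/2), and g_A decreases.  On the real line Re w^(3/2) is 0 for
   u <= 0 and u sqrt u for u > 0. *)
From Stdlib Require Import Reals Lra Psatz.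
From Coquelicot Require Import Coquelicot.
Open Scope R_scope.

Definition re_pow32 (u r : R) : R := (2 * u - r) * sqrt ((r + u) / 2).

Lemma cos_three_halves_acos (c : R) : -1 <= c <= 1 ->
  cos (3/2 * acos c) = sqrt ((1 + c) / 2) * (2 * c - 1).
Proof.
  intros Hc.
  set (a := acos c / 2).
  assert (Ha : 0 <= a <= PI / 2) by (pose proof (acos_bound c); unfold a; lra).
  assert (Hcos2a : cos (2 * a) = c)
    by (replace (2 * a) with (acos c) by (unfold a; field); now apply cos_acos).
  assert (Hcosa : sqrt ((1 + c) / 2) = cos a).
  { apply sqrt_lem_1; [lra | now apply cos_ge_0; lra |].
    rewrite cos_2a_cos in Hcos2a; lra. }
  replace (3/2 * acos c) with (2 * a + a) by (unfold a; field).
  rewrite cos_plus, sin_2a, Hcosa, <- Hcos2a, cos_2a_cos.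
  rewrite <- (sin2_cos2 a); unfold Rsqr; ring.
Qed.

Lemma Re_cpow32 (w : C) : Re (cpow32 w) = re_pow32 (Re w) (Cmod w).
Proof.
  unfold cpow32, re_pow32; destruct (Ceq_dec w 0) as [->|Hw].
  - rewrite Cmod_0; simpl; replace ((0 + 0) / 2) with 0 by field.
    rewrite sqrt_0; ring.
  - apply Cmod_gt_0 in Hw; simpl.
    pose proof (re_le_Cmod w) as Hu.
    set (r := Cmod w) in *; set (u := Re w) in *.
    assert (Hc : -1 <= u / r <= 1).
    { split; [apply Rle_div_r | apply Rle_div_l]; unfold Rabs in Hu;
        destruct (Rcase_abs u); lra. }
    assert (Hcos : cos (3/2 * Arg w) = cos (3/2 * acos (u / r))).
    { unfold Arg; destruct (Rle_dec 0 (Im w)); [easy |].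
      now rewrite <- cos_neg, Ropp_mult_distr_r, Ropp_involutive. }
    rewrite Hcos, cos_three_halves_acos by exact Hc.
    replace (3/2) with (1 + /2) by field.
    rewrite Rpower_plus, Rpower_1, Rpower_sqrt by exact Hw.
    replace ((r + u) / 2) with (r * ((1 + u / r) / 2)) by (field; lra).
    rewrite sqrt_mult_alt by lra; field; lra.
Qed.

Lemma gA_sub (x : R) (z : C) :
  gA (RtoC x - z) =
  exp (- (2/3) * re_pow32 (x - Re z) (sqrt ((x - Re z) ^ 2 + Im z ^ 2))).
Proof.
  unfold gA; rewrite Re_cpow32; destruct z as [a b]; unfold Cmod; simpl.
  do 4 f_equal; ring.
Qed.

Lemma sqrt_sum_sqr_add_pos (u b : R) : b <> 0 -> 0 < sqrt (u ^ 2 + b ^ 2) + u.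
Proof.
  intros Hb.
  assert (Hlt : Rabs u < sqrt (u ^ 2 + b ^ 2)).
  { rewrite <- sqrt_Rsqr_abs; apply sqrt_lt_1; unfold Rsqr;
      [nra | nra | pose proof (Rsqr_pos_lt b Hb); unfold Rsqr in *; nra]. }
  pose proof (Rle_abs (- u)); rewrite Rabs_Ropp in *; lra.
Qed.

Lemma sqrt_sum_sqr_add_lt (u1 u2 b : R) : b <> 0 -> u1 < u2 ->
  sqrt (u1 ^ 2 + b ^ 2) + u1 < sqrt (u2 ^ 2 + b ^ 2) + u2.
Proof.
  intros Hb Hu.
  pose proof (sqrt_sum_sqr_add_pos u1 b Hb).
  pose proof (sqrt_sum_sqr_add_pos u2 b Hb).
  pose proof (sqrt_sqrt (u1 ^ 2 + b ^ 2) ltac:(nra)).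
  pose proof (sqrt_sqrt (u2 ^ 2 + b ^ 2) ltac:(nra)).
  pose proof (sqrt_pos (u1 ^ 2 + b ^ 2)); pose proof (sqrt_pos (u2 ^ 2 + b ^ 2)).
  nra.
Qed.

(* Re w^(3/2) = Re (sqrt w)^3 with sqrt w = t + i b / (2 t). *)
Lemma re_pow32_Re_sqrt (u b t : R) : 0 < t ->
  t * t = (sqrt (u ^ 2 + b ^ 2) + u) / 2 ->
  re_pow32 u (sqrt (u ^ 2 + b ^ 2)) = t ^ 3 - 3 * b ^ 2 / 4 / t.
Proof.
  intros Ht Htt; unfold re_pow32; rewrite <- Htt, sqrt_square by lra.
  pose proof (sqrt_sqrt (u ^ 2 + b ^ 2) ltac:(nra)).
  apply (Rmult_eq_reg_r t); [| lra]; field_simplify; [| lra]; nra.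
Qed.

Lemma cube_sub_div_lt (k t1 t2 : R) : 0 <= k -> 0 < t1 < t2 ->
  t1 ^ 3 - k / t1 < t2 ^ 3 - k / t2.
Proof.
  intros Hk Ht.
  assert (Hcube : t1 ^ 3 < t2 ^ 3).
  { assert (0 < (t2 - t1) * (t2 * t2 + t1 * t2 + t1 * t1))
      by (apply Rmult_lt_0_compat; nra).
    nra. }
  assert (Hinv : / t2 < / t1) by (apply Rinv_lt_contravar; nra).
  assert (k / t2 <= k / t1) by (apply Rmult_le_compat_l; lra).
  lra.
Qed.

Lemma re_pow32_line_lt (b u1 u2 : R) : b <> 0 -> u1 < u2 ->
  re_pow32 u1 (sqrt (u1 ^ 2 + b ^ 2)) < re_pow32 u2 (sqrt (u2 ^ 2 + b ^ 2)).
Proof.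
  intros Hb Hu.
  set (t u := sqrt ((sqrt (u ^ 2 + b ^ 2) + u) / 2)).
  assert (Ht : forall u, 0 < t u /\ t u * t u = (sqrt (u ^ 2 + b ^ 2) + u) / 2).
  { intros u; pose proof (sqrt_sum_sqr_add_pos u b Hb).
    split; [apply sqrt_lt_R0 | apply sqrt_sqrt]; lra. }
  rewrite (re_pow32_Re_sqrt u1 b (t u1)), (re_pow32_Re_sqrt u2 b (t u2))
    by apply Ht.
  apply cube_sub_div_lt; [nra | split; [apply Ht |]].
  pose proof (sqrt_sum_sqr_add_pos u1 b Hb).
  pose proof (sqrt_sum_sqr_add_lt u1 u2 b Hb Hu).
  apply sqrt_lt_1; lra.
Qed.

Lemma re_pow32_real (u : R) :
  re_pow32 u (sqrt (u ^ 2 + 0 ^ 2)) = if Rle_dec u 0 then 0 else u * sqrt u.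
Proof.
  unfold re_pow32; replace (u ^ 2 + 0 ^ 2) with (Rsqr u) by (unfold Rsqr; ring).
  rewrite sqrt_Rsqr_abs; destruct (Rle_dec u 0).
  - rewrite Rabs_left1, Rplus_opp_l, Rdiv_0_l, sqrt_0 by exact r; ring.
  - rewrite Rabs_right by lra; replace ((u + u) / 2) with u by field; ring.
Qed.

Lemma mul_sqrt_self_lt (u1 u2 : R) : 0 < u1 < u2 -> u1 * sqrt u1 < u2 * sqrt u2.
Proof.
  intros Hu.
  assert (sqrt u1 < sqrt u2) by (apply sqrt_lt_1; lra).
  assert (0 < sqrt u1) by (apply sqrt_lt_R0; lra).
  nra.
Qed.

Theorem lemma2p2 (z : C) :
  (Im z <> 0 ->
     forall x y : R, 0 <= x -> x < y ->
       gA (RtoC x - z) > gA (RtoC y - z)) /\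
  (Im z = 0 ->
     (forall x : R, 0 <= x -> x <= Re z -> gA (RtoC x - z) = 1) /\
     (forall x y : R, Re z < x -> x < y ->
       gA (RtoC x - z) > gA (RtoC y - z))).
Proof.
  split.
  - intros Hb x y _ Hxy; rewrite !gA_sub; apply exp_increasing.
    pose proof (re_pow32_line_lt (Im z) (x - Re z) (y - Re z) Hb ltac:(lra)); lra.
  - intros Hb; split.
    + intros x _ Hx; rewrite gA_sub, Hb, re_pow32_real.
      destruct (Rle_dec (x - Re z) 0); [| lra].
      rewrite Rmult_0_r; apply exp_0.
    + intros x y Hx Hxy; rewrite !gA_sub, Hb, !re_pow32_real.
      apply exp_increasing.
      destruct (Rle_dec (x - Re z) 0); [lra |].
      destruct (Rle_dec (y - Re z) 0); [lra |].
      pose proof (mul_sqrt_self_lt (x - Re z) (y - Re z) ltac:(lra)); lra.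
Qed.
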